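(* Let $k$ be an even integer and consider the bijections of $\mathbb{C}^3$ \[ \mathrm{w}:(s,w,u)\mapsto(w,s,-s-w-u+k),\quad a:(s,w,u)\mapsto(s+w-\tfrac12,1-w,w+u-\tfrac12),\quad c:(s,w,u)\mapsto(1-w,1-s,s+w+u-1). \] The group generated by $\mathrm{w},a,c$ under composition is isomorphic to the dihedral group of order twelve.
   Context: These three maps are the changes of variables $(s,w,u)\mapsto(\cdot)$ appearing in the three functional equations of the kernel $\Omega_{k,s,w,u}$. *)

From HB Require Import structures.
From mathcomp Require Import all_boot all_order all_algebra all_fingroup all_solvable.
From mathcomp Require Import complex reals.
Set Implicit Arguments. Unset Strict Implicit. Unset Printing Implicit Defensive.
Import GRing.Theory Num.Theory.
Local Open Scope ring_scope.

Definition C3 (R : realType) := (R[i] * R[i] * R[i])%type.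

Definition map_w (R : realType) (k : int) (x : C3 R) : C3 R :=
  let: (s, w, u) := x in (w, s, - s - w - u + k%:~R).

Definition map_a (R : realType) (x : C3 R) : C3 R :=
  let: (s, w, u) := x in (s + w - 1/2, 1 - w, w + u - 1/2).

Definition map_c (R : realType) (x : C3 R) : C3 R :=
  let: (s, w, u) := x in (1 - w, 1 - s, s + w + u - 1).

Inductive gen_group (T : Type) (S : (T -> T) -> Prop) : (T -> T) -> Prop :=
  | gen_in f : S f -> gen_group S f
  | gen_id : gen_group S id
  | gen_comp f g : gen_group S f -> gen_group S g -> gen_group S (f \o g)
  | gen_inv f g : gen_group S f -> cancel f g -> cancel g f -> gen_group S g.

Definition comp_group_isog (T : Type) (G : (T -> T) -> Prop) (H : finGroupType) :=
  exists phi : (T -> T) -> H,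
    [/\ (forall f g, G f -> G g -> phi (f \o g) = (phi f * phi g)%g),
        (forall f g, G f -> G g -> phi f = phi g -> f = g) &
        (forall h : H, exists2 f, G f & phi f = h)].

(* Put X = w \o a and Y = w.  Then X^6 = Y^2 = 1 and X Y X = Y, so every element
   of the generated group is a word X^i Y^b (i mod 6, b a bit), and words
   multiply exactly as the words x^i y^b in the standard generators of the
   dihedral group of order 12; matching them gives the isomorphism.  The twelve
   words are pairwise distinct: the first two coordinates of w, a, c do not
   involve u, and in the (s,w)-plane all three maps fix (1/2,1/2), around which
   X acts by the integer rotation (s,w) |-> (-w, s+w) of order 6 and Y by the
   swap, so the words already move the lattice point (2,1) to twelve different
   places. *)

From HB Require Import structures.
From mathcomp Require Import all_boot all_order all_algebra all_fingroup all_solvable.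
From mathcomp Require Import complex reals.
From mathcomp Require Import ring.
From Stdlib Require Import FunctionalExtensionality ClassicalEpsilon.
Import GRing.Theory Num.Theory.

Set Implicit Arguments.
Unset Strict Implicit.
Unset Printing Implicit Defensive.

(* [(i, b)] stands for the dihedral word x^i y^b. *)
Definition dmul n (p q : 'Z_n * bool) : 'Z_n * bool :=
  (p.1 + (if p.2 then - q.1 else q.1), p.2 (+) q.2)%R.

Section DihedralWords.
Variables (T : Type) (op : T -> T -> T) (e : T).
Hypotheses (opA : associative op) (op1 : left_id e op) (opr1 : right_id e op).

Definition power (z : T) m := iter m (op z) e.

Lemma powerD z m m' : power z (m + m') = op (power z m) (power z m').
Proof. by elim: m => [|m IHm] /=; rewrite ?op1 // IHm opA. Qed.

Lemma powerSr z m : power z m.+1 = op (power z m) z.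
Proof. by rewrite -addn1 powerD /power /= opr1. Qed.

Lemma power_mod z N m : power z N = e -> power z (m %% N) = power z m.
Proof.
move=> z_N; rewrite {2}(divn_eq m N) powerD.
suff -> : power z (m %/ N * N) = e by rewrite op1.
by elim: (m %/ N) => [|q IHq] //; rewrite mulSn powerD z_N op1.
Qed.

Variables (n : nat) (x y : T).

Definition dword (p : 'Z_n * bool) := op (power x p.1) (if p.2 then y else e).

Hypotheses (n_gt1 : 1 < n) (x_n : power x n = e) (y_2 : op y y = e)
  (xyx : op x (op y x) = y).

Lemma power_ZpD (i j : 'Z_n) : power x (i + j)%R = op (power x i) (power x j).
Proof. by rewrite /= power_mod ?powerD ?Zp_cast. Qed.

Lemma power_ZpNK (i : 'Z_n) : op (power x (- i)%R) (power x i) = e.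
Proof. by rewrite -power_ZpD addNr. Qed.

Lemma y_power_Zp (i : 'Z_n) : op y (power x i) = op (power x (- i)%R) y.
Proof.
have xyx_m m : op (power x m) (op y (power x m)) = y.
  elim: m => [|m IHm]; first by rewrite /= op1.
  by rewrite [in op y _]powerSr /= -opA (opA y) (opA (power x m)) IHm.
by rewrite -[LHS]op1 -(power_ZpNK i) -!opA xyx_m.
Qed.

Lemma dwordM p q : dword (dmul p q) = op (dword p) (dword q).
Proof.
case: p q => i [] [j c]; rewrite /dword /dmul power_ZpD; last by rewrite opr1 opA.
by rewrite -!opA (opA y) y_power_Zp -opA; case: c; rewrite /= ?y_2 ?opr1.
Qed.

End DihedralWords.

Local Open Scope group_scope.

Section DihedralGroup.
Variables (gT : finGroupType) (n : nat) (x y : gT).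
Hypotheses (n_gt1 : 1 < n) (card_gT : #|gT| = n.*2)
  (gen_xy : <[x]> <*> <[y]> = [set: gT])
  (x_n : x ^+ n = 1) (y_2 : y ^+ 2 = 1) (xyx : x * (y * x) = y).

Lemma power_mulg (z : gT) m : power *%g 1 z m = z ^+ m.
Proof. exact: iter_mulg_1. Qed.

Local Notation d := (@dword _ *%g 1 n x y).

Lemma dword_mulgM p q : d (dmul p q) = d p * d q.
Proof.
by apply: dwordM; rewrite ?power_mulg //; [exact: mulgA | exact: mul1g | exact: mulg1].
Qed.

Lemma dword_mulg_bij : bijective d.
Proof.
have d_gen : [set d p | p in [set: 'Z_n * bool]] = [set: gT].
  have d_group : group_set [set d p | p in [set: 'Z_n * bool]].
    apply/group_setP; split.
      by apply/imsetP; exists (0%R, false); rewrite ?inE // /dword mulg1.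
    by move=> _ _ /imsetP[p _ ->] /imsetP[q _ ->]; rewrite -dword_mulgM imset_f.
  apply/eqP; rewrite eqEsubset subsetT /= -gen_xy.
  rewrite (join_subG _ _ (Group d_group)) !cycle_subG; apply/andP; split.
    by apply/imsetP; exists (1%R, false); rewrite ?inE // /dword /= !mulg1.
  by apply/imsetP; exists (0%R, true); rewrite ?inE // /dword /= mul1g.
have card_idx : #|{: 'Z_n * bool}| = n.*2.
  by rewrite card_prod card_bool card_ord Zp_cast // muln2.
have /imset_injP d_inj : #|[set d p | p in [set: 'Z_n * bool]]| == #|[set: 'Z_n * bool]|.
  by rewrite d_gen !cardsT card_gT card_idx.
apply: inj_card_bij; first by move=> p q; apply: d_inj; rewrite inE.
by rewrite card_gT card_idx.
Qed.

End DihedralGroup.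

Lemma dihedral_generators q : 1 < q ->
  exists x y : 'D_q.*2, [/\ <[x]> <*> <[y]> = [set: 'D_q.*2], x ^+ q = 1,
                            y ^+ 2 = 1 & x * (y * x) = y].
Proof.
move=> q_gt1; have := Grp_dihedral q_gt1 [set: 'D_q.*2]%G.
rewrite homg_refl => /esym/existsP[[x y]] /= /eqP[gen_xy x_q y_2 x_y].
exists x, y; split=> //.
have xy : x * y = y * x ^ y by rewrite conjgE mulKVg.
by rewrite mulgA xy x_y -mulgA mulVg mulg1.
Qed.

Section GeneratedGroupIsog.
Variables (T : Type) (S : (T -> T) -> Prop) (gT : finGroupType) (rho : gT -> T -> T).
Hypotheses (rhoM : forall g h, rho (g * h) = rho g \o rho h) (rho1 : rho 1 = id)
  (rho_faithful : forall g, rho g = id -> g = 1)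
  (S_rho : forall f, S f -> exists g, rho g = f)
  (rho_gen : forall g, gen_group S (rho g)).

Lemma rhoV g : rho g \o rho g^-1 = id.
Proof. by rewrite -rhoM mulgV. Qed.

Lemma rho_inj : injective rho.
Proof.
move=> g h gh; apply/eqP; rewrite eq_mulVg1; apply/eqP/rho_faithful.
by rewrite rhoM -gh -rhoM mulVg.
Qed.

Lemma gen_group_rho f : gen_group S f -> exists g, rho g = f.
Proof.
elim=> {f} [f /S_rho // | | _ _ _ [g <-] _ [h <-] | _ f _ [g <-] gf fg].
- by exists 1.
- by exists (g * h).
exists g^-1; apply: functional_extensionality => z.
by have /= := congr1 (fun h => f (h z)) (rhoV g); rewrite gf.
Qed.

Lemma comp_group_isog_rep : comp_group_isog (gen_group S) gT.
Proof.
pose phi f := epsilon (inhabits 1) (fun g => rho g = f).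
have phi_rho g : phi (rho g) = g.
  by apply: rho_inj; apply: (epsilon_spec (inhabits 1) (fun h => rho h = rho g)); exists g.
exists phi; split.
- by move=> _ _ /gen_group_rho[g <-] /gen_group_rho[h <-]; rewrite -rhoM !phi_rho.
- by move=> _ _ /gen_group_rho[g <-] /gen_group_rho[h <-]; rewrite !phi_rho => ->.
- by move=> g; exists (rho g); rewrite ?phi_rho.
Qed.

End GeneratedGroupIsog.

Lemma gen_group_power T (S : (T -> T) -> Prop) f m :
  gen_group S f -> gen_group S (power comp id f m).
Proof. by move=> Sf; elim: m => [|m IHm] /=; [apply: gen_id | apply: gen_comp]. Qed.

Lemma comp_group_isog_dihedral T (S : (T -> T) -> Prop) (gT : finGroupType) n
    (x y : gT) (X Y : T -> T) :
  1 < n -> #|gT| = n.*2 -> <[x]> <*> <[y]> = [set: gT] ->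
  x ^+ n = 1 -> y ^+ 2 = 1 -> x * (y * x) = y ->
  power comp id X n = id -> Y \o Y = id -> X \o (Y \o X) = Y ->
  (forall p : 'Z_n * bool, dword comp id X Y p = id -> p = (0%R, false)) ->
  (forall f, S f -> exists p : 'Z_n * bool, dword comp id X Y p = f) ->
  gen_group S X -> gen_group S Y ->
  comp_group_isog (gen_group S) gT.
Proof.
move=> n_gt1 card_gT gen_xy x_n y_2 xyx X_n Y_2 XYX F_faithful S_F S_X S_Y.
have [d' dK d'K] := dword_mulg_bij n_gt1 card_gT gen_xy x_n y_2 xyx.
have d0 : @dword _ *%g 1 n x y (0%R, false) = 1 by rewrite /dword mulg1.
have FM := dwordM (@compA _ _ _ _) (fun _ => erefl) (fun _ => erefl) n_gt1 X_n Y_2 XYX.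
apply: (@comp_group_isog_rep _ _ _ (fun g => dword comp id X Y (d' g))).
- move=> g h; rewrite -FM; congr dword; apply: (can_inj dK).
  by rewrite dword_mulgM // !d'K.
- by rewrite -d0 dK.
- by move=> g /F_faithful d'g; rewrite -[g]d'K d'g d0.
- by move=> f /S_F[p <-]; exists (dword *%g 1 x y p); rewrite dK.
- move=> g; apply: gen_comp; first exact: gen_group_power.
  by case: (d' g).2; [apply: S_Y | apply: gen_id].
Qed.

Local Close Scope group_scope.
Local Open Scope ring_scope.

Lemma dword_conj A B (phi : A -> B) (x y : A -> A) (x' y' : B -> B) n :
    (forall z, phi (x z) = x' (phi z)) -> (forall z, phi (y z) = y' (phi z)) ->
  forall (p : 'Z_n * bool) z,
    phi (dword comp id x y p z) = dword comp id x' y' p (phi z).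
Proof.
move=> phix phiy [i b] z; rewrite /dword /=.
elim: (nat_of_ord i) => [|m IHm] /=; last by rewrite phix IHm.
by case: b.
Qed.

Definition plane_rot (V : zmodType) (v : V * V) : V * V := (- v.2, v.1 + v.2).
Definition plane_swap (A : Type) (v : A * A) : A * A := (v.2, v.1).

Lemma plane_rot_faithful (p : 'Z_6 * bool) :
  dword comp id (@plane_rot int) (@plane_swap int) p (2, 1) = (2, 1) -> p = (0, false).
Proof. by case: p => -[[|[|[|[|[|[|//]]]]]] ?] [] //= _; congr pair; apply: val_inj. Qed.

Section Maps.
Variables (R : realType) (k : int).

Let X : C3 R -> C3 R := map_w k \o @map_a R.
Let Y : C3 R -> C3 R := map_w k.
Local Notation F := (@dword (C3 R -> C3 R) comp id 6 X Y).

Let h : R[i] * R[i] := (1/2, 1/2).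
Let to_plane (z : C3 R) := z.1 - h.

Lemma to_plane_X z : to_plane (X z) = plane_rot (to_plane z).
Proof. by case: z => [[s w] u]; congr pair; rewrite /=; field. Qed.

Lemma to_plane_Y z : to_plane (Y z) = plane_swap (to_plane z).
Proof. by case: z => [[s w] u]. Qed.

Let intp (v : int * int) : R[i] * R[i] := (v.1%:~R, v.2%:~R).

Lemma intp_inj : injective intp.
Proof. by move=> [a b] [c d] [/intr_inj -> /intr_inj ->]. Qed.

Lemma intp_rot v : intp (plane_rot v) = plane_rot (intp v).
Proof. by rewrite /intp /= rmorphN rmorphD. Qed.

Lemma intp_swap v : intp (plane_swap v) = plane_swap (intp v).
Proof. by []. Qed.

Lemma dword_XY_faithful p : F p = id -> p = (0, false).
Proof.
move=> Fp; apply/plane_rot_faithful/intp_inj.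
pose z0 : C3 R := (intp (2, 1) + h, 0).
have z0_plane : to_plane z0 = intp (2, 1) by rewrite /to_plane addrK.
rewrite (dword_conj intp_rot intp_swap) -z0_plane.
by rewrite -(dword_conj to_plane_X to_plane_Y) Fp.
Qed.

Ltac affine_ext := apply: functional_extensionality => -[[s w] u];
  rewrite /X /Y /=; congr (_, _, _); by field.

Lemma X_6 : power comp id X 6 = id.
Proof. affine_ext. Qed.

Lemma Y_2 : Y \o Y = id.
Proof. affine_ext. Qed.

Lemma XYX : X \o (Y \o X) = Y.
Proof. affine_ext. Qed.

Lemma dword_map_a : F (5, true) = @map_a R.
Proof. affine_ext. Qed.

Lemma dword_map_c : F (3, true) = @map_c R.
Proof. affine_ext. Qed.

End Maps.

Theorem proposition4 (R : realType) (k : int) (hk : (2 %| k)%Z) :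
  comp_group_isog
    (gen_group (fun f : C3 R -> C3 R =>
                  f = map_w k \/ f = @map_a R \/ f = @map_c R))
    'D_12.
Proof.
have [x [y [gen_xy x_6 y_2 xyx]]] := @dihedral_generators 6 isT.
apply: (comp_group_isog_dihedral _ _ gen_xy x_6 y_2 xyx
          (X_6 R k) (Y_2 R k) (XYX R k) (@dword_XY_faithful R k)) => //.
- by rewrite -cardsT card_dihedral.
- move=> f [->|[->|->]].
  + by exists (0, true).
  + by exists (5, true); apply: dword_map_a.
  + by exists (3, true); apply: dword_map_c.
- by apply: gen_comp; apply: gen_in; [left | right; left].
- by apply: gen_in; left.
Qed.
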